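(* Let $P$ be the path $u,w,v$ of length 2, let $m\ge 3$, and let $L$ be an $m$-assignment for $P$. For $c\in L(u)$ and $d\in L(v)$ let $N(c,d)$ be the number of proper $L$-colorings of $P$ in which $u$ is colored $c$ and $v$ is colored $d$. Let $a=|L(u)\cap L(v)|$. Then: (i) for each $c\in L(u)$ and $d\in L(v)$, $m-2\le N(c,d)\le m$; (ii) the number of ordered pairs $(c,d)\in L(u)\times L(v)$ with $N(c,d)=m-2$ is at most $\frac{(a+m)^2}{4}-a$.
   Context: An $m$-assignment $L$ assigns to each vertex $x$ a set $L(x)$ of $m$ colors; a proper $L$-coloring is a proper coloring $f$ with $f(x)\in L(x)$ for every vertex $x$. *)

From mathcomp Require Import all_boot.
Set Implicit Arguments. Unset Strict Implicit. Unset Printing Implicit Defensive.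

Definition pu : 'I_3 := @Ordinal 3 0 isT.
Definition pw : 'I_3 := @Ordinal 3 1 isT.
Definition pv : 'I_3 := @Ordinal 3 2 isT.

Definition P_edge (x y : 'I_3) : bool :=
  [|| (x == pu) && (y == pw), (x == pw) && (y == pu),
      (x == pw) && (y == pv) | (x == pv) && (y == pw)].

Definition is_assignment (C : finType) (m : nat) (L : 'I_3 -> {set C}) : Prop :=
  forall x, #|L x| = m.

Definition proper_Lcol (C : finType) (L : 'I_3 -> {set C}) (f : {ffun 'I_3 -> C}) : bool :=
  [forall x, f x \in L x] && [forall x, forall y, P_edge x y ==> (f x != f y)].

Definition Ncd (C : finType) (L : 'I_3 -> {set C}) (c d : C) : nat :=
  #|[set f : {ffun 'I_3 -> C} | [&& proper_Lcol L f, f pu == c & f pv == d]]|.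

(* Once u and v are coloured c and d, w may take any colour of L(w) other than
   c and d, so N(c,d) = m - [c in L(w)] - [d in L(w), d <> c].  Hence
   N(c,d) = m - 2 exactly for the pairs of distinct colours c in X = L(u) ∩ L(w),
   d in Y = L(v) ∩ L(w); there are |X||Y| - |X ∩ Y| of them.  Since X ∪ Y lies in
   L(w), |X| + |Y| <= m + |X ∩ Y|, and AM-GM together with |X ∩ Y| <= a gives the
   bound. *)
From mathcomp Require Import all_boot.
From mathcomp Require Import zify.

Lemma ord3P (i : 'I_3) : [\/ i = pu, i = pw | i = pv].
Proof.
case: i => [[|[|[|k]]] lt_i3] //.
- by apply: Or31; apply/val_inj.
- by apply: Or32; apply/val_inj.
- by apply: Or33; apply/val_inj.
Qed.

Lemma card_setX_neq (T : finType) (A B : {set T}) :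
  #|[set p in setX A B | p.1 != p.2]| = #|A| * #|B| - #|A :&: B|.
Proof.
have -> : [set p in setX A B | p.1 != p.2] = setX A B :\: [set (t, t) | t in A :&: B].
  apply/setP => -[c d]; rewrite !inE /=.
  have -> : ((c, d) \in [set (t, t) | t in A :&: B]) = (c == d) && (c \in A :&: B).
    apply/imsetP/andP => [[t At [-> ->]] | [/eqP <- ABc]]; first by rewrite eqxx.
    by exists c.
  case: eqVneq => [<-|_]; rewrite !inE ?andbT //.
  by case: (c \in A); case: (c \in B).
have diag_sub : [set (t, t) | t in A :&: B] \subset setX A B.
  by apply/subsetP => _ /imsetP [t /setIP [At Bt] ->]; rewrite inE At Bt.
rewrite cardsD (setIidPr diag_sub) cardsX card_imset //.
by move=> s t [].
Qed.

Lemma AGM_sub_bound (x y z a m : nat) : 2 <= m -> z <= a -> x + y <= m + z ->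
  4 * (x * y - z) + 4 * a <= (a + m) ^ 2.
Proof.
move=> m_ge2 z_le_a xy_le.
have agm := (nat_AGM2 x y).1.
have sq : (x + y) ^ 2 <= (m + z) ^ 2 by rewrite leq_exp2r.
by move: z_le_a => /subnK <-; set k := a - z; nia.
Qed.

Section PathColourings.
Variables (C : finType) (L : 'I_3 -> {set C}).

Definition path_col (c z d : C) : {ffun 'I_3 -> C} :=
  [ffun i => if i == pu then c else if i == pw then z else d].

Lemma proper_LcolP (f : {ffun 'I_3 -> C}) :
  reflect [/\ f pu \in L pu, f pw \in L pw :\ f pu :\ f pv & f pv \in L pv]
          (proper_Lcol L f).
Proof.
apply: (iffP andP) => [[/forallP inL /forallP edge_ok] | [fu_in fw_in fv_in]].
  have /forallP edges_w := edge_ok pw.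
  by rewrite !inE (implyP (edges_w pu) isT) (implyP (edges_w pv) isT) !inL.
move: fw_in; rewrite !inE => /and3P [fw_fv fw_fu fw_in].
split; apply/forallP => i; first by case: (ord3P i) => ->.
apply/forallP => j.
by case: (ord3P i) => ->; case: (ord3P j) => ->; rewrite //= 1?eq_sym.
Qed.

Lemma NcdE (c d : C) : c \in L pu -> d \in L pv ->
  Ncd L c d = #|L pw :\ c :\ d|.
Proof.
move=> Lu_c Lv_d.
have col_inj : injective (path_col c ^~ d).
  by move=> z1 z2 /ffunP /(_ pw); rewrite !ffunE.
rewrite /Ncd -(card_imset _ col_inj); apply: eq_card => f; rewrite !inE.
apply/and3P/imsetP => [[/proper_LcolP [_ fw_in _] /eqP fu /eqP fv] | [z z_in ->]].
  exists (f pw); first by rewrite -fu -fv.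
  by apply/ffunP => i; rewrite ffunE; case: (ord3P i) => ->; rewrite ?fu ?fv.
by split; rewrite ?ffunE //; apply/proper_LcolP; rewrite !ffunE.
Qed.

Lemma Ncd_sub (c d : C) : c \in L pu -> d \in L pv ->
  Ncd L c d = #|L pw| - (c \in L pw) - (d \in L pw :\ c).
Proof.
by move=> Lu_c Lv_d; rewrite NcdE // (cardsD1 c (L pw)) (cardsD1 d (L pw :\ c)); lia.
Qed.

Lemma Ncd_eq_sub2 (c d : C) : 2 <= #|L pw| -> c \in L pu -> d \in L pv ->
  (Ncd L c d == #|L pw| - 2) = [&& c \in L pw, d \in L pw & c != d].
Proof.
move=> Lw_ge2 Lu_c Lv_d; rewrite Ncd_sub // !inE (eq_sym d c).
by case: (c \in L pw); case: (d \in L pw); case: (c != d); lia.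
Qed.

End PathColourings.

Theorem lemma19 (C : finType) (m : nat) (L : 'I_3 -> {set C}) :
  3 <= m -> is_assignment m L ->
  let a := #|L pu :&: L pv| in
  (forall c d, c \in L pu -> d \in L pv -> m - 2 <= Ncd L c d <= m) /\
  4 * #|[set p in setX (L pu) (L pv) | Ncd L p.1 p.2 == m - 2]| + 4 * a
    <= (a + m) ^ 2.
Proof.
move=> m_ge3 card_L a; split=> [c d Lu_c Lv_d|].
  by rewrite Ncd_sub // card_L; case: (c \in L pw); case: (_ \in _); lia.
set X := L pu :&: L pw; set Y := L pv :&: L pw.
have -> : [set p in setX (L pu) (L pv) | Ncd L p.1 p.2 == m - 2]
          = [set p in setX X Y | p.1 != p.2].
  apply/setP => -[c d]; rewrite !inE /=.
  have [Lu_c|] //= := boolP (c \in L pu).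
  have [Lv_d|] //= := boolP (d \in L pv); last by rewrite andbF.
  by rewrite -(card_L pw) Ncd_eq_sub2 ?card_L 1?ltnW // andbA.
rewrite card_setX_neq.
have XY_a : #|X :&: Y| <= a.
  by apply/subset_leq_card/setISS; apply: subsetIl.
have XY_m : #|X :|: Y| <= m.
  by rewrite -(card_L pw); apply/subset_leq_card; rewrite subUset !subsetIr.
apply: AGM_sub_bound (ltnW m_ge3) XY_a _.
by rewrite -cardsUI leq_add2r.
Qed.
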